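(* Let $A=[a_{ij}]\in N_n$ and let $(i,j)$ with $a_{ij}\neq0$. If there exist $\lambda\in\mathbb F$ and $1\le p<q\le n$ such that the $(i,j)$ entry of $\mathcal O_{p,q}^\lambda(A)$ is $0$, then one of the following holds: (1) there is $p'$ with $i<p'<j$ and $a_{ip'}\neq0$; in this case $\mathcal O_{p',j}^{\mu}(A)$ with $\mu=a_{ij}/a_{ip'}$ has $(i,j)$ entry $0$; (2) there is $q'$ with $i<q'<j$ and $a_{q'j}\neq0$; in this case $\mathcal O_{i,q'}^{\mu}(A)$ with $\mu=-a_{ij}/a_{q'j}$ has $(i,j)$ entry $0$.
   Context: $\mathbb F$ is a field; $N_n$ is the set of strictly upper triangular $n\times n$ matrices over $\mathbb F$; $E_{pq}$ is the matrix unit. For $\lambda\in\mathbb F$ and $1\le p<q\le n$, the elementary $U_n$-similarity operation is $\mathcal O_{p,q}^\lambda(X)=(I_n+\lambda E_{pq})X(I_n+\lambda E_{pq})^{-1}$ for $X\in N_n$. (In graph language: the arc $(i,j)$ of the graph of $A$, whose arcs are the positions of nonzero entries, can be eliminated by such an operation only in the two cases listed.) *)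

From mathcomp Require Import all_boot all_algebra.
Set Implicit Arguments. Unset Strict Implicit. Unset Printing Implicit Defensive.
Import GRing.Theory.
Local Open Scope ring_scope.

Definition strictly_upper (F : fieldType) (n : nat) (A : 'M[F]_n) : Prop :=
  forall i j : 'I_n, (j <= i)%N -> A i j = 0.

Definition elem_sim (F : fieldType) (n : nat) (lam : F) (p q : 'I_n)
    (X : 'M[F]_n) : 'M[F]_n :=
  (1%:M + lam *: delta_mx p q) *m X *m invmx (1%:M + lam *: delta_mx p q).

From mathcomp Require Import all_boot all_algebra.
From mathcomp Require Import ring.
Import GRing.Theory.
Local Open Scope ring_scope.

(* Conjugating by the transvection I + lam E_pq changes only row p and column q:
   the (i, j) entry moves by lam (a_qj [i = p] - a_ip [j = q]), up to a term
   lam^2 a_qp that vanishes on strictly upper triangular matrices when p < q.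
   So a nonzero entry a_ij can be cleared only with i = p and a_qj <> 0, or with
   j = q and a_ip <> 0; in these cases lam is forced, which gives the two
   explicit operations. *)

Lemma delta_mulmxE {R : pzSemiRingType} {m n k : nat} (p : 'I_m) (q : 'I_n)
    (B : 'M[R]_(n, k)) i j :
  (delta_mx p q *m B) i j = (i == p)%:R * B q j.
Proof.
rewrite mxE (bigD1 q) //= big1 ?addr0 => [|l /negbTE ql];
  rewrite mxE ?eqxx ?andbT //.
by rewrite ql andbF mul0r.
Qed.

Lemma mulmx_deltaE {R : pzSemiRingType} {m n k : nat} (p : 'I_n) (q : 'I_k)
    (B : 'M[R]_(m, n)) i j :
  (B *m delta_mx p q) i j = B i p * (j == q)%:R.
Proof.
rewrite mxE (bigD1 p) //= big1 ?addr0 => [|l /negbTE lp]; rewrite mxE ?eqxx //.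
by rewrite lp mulr0.
Qed.

Lemma invmx_transvection {R : comUnitRingType} {n : nat} (a : R) (p q : 'I_n) :
  p != q -> invmx (1%:M + a *: delta_mx p q) = 1%:M - a *: delta_mx p q.
Proof.
move=> /negbTE qp.
have T_rinv : (1%:M + a *: delta_mx p q) *m (1%:M - a *: delta_mx p q) = 1%:M.
  rewrite mulmxDl !mulmxBr !mulmx1 mul1mx -scalemxAl -scalemxAr.
  by rewrite mul_delta_mx_cond eq_sym qp !scaler0 subr0 subrK.
have [T_unit _] := mulmx1_unit T_rinv.
by rewrite -[RHS](mulKmx T_unit) T_rinv mulmx1.
Qed.

Lemma elem_simE {F : fieldType} {n : nat} (lam : F) (p q : 'I_n) (X : 'M[F]_n) i j :
  p != q ->
  elem_sim lam p q X i j =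
  X i j + lam * ((i == p)%:R * X q j - X i p * (j == q)%:R)
    - lam ^+ 2 * ((i == p)%:R * X q p * (j == q)%:R).
Proof.
move=> pq; rewrite /elem_sim invmx_transvection //.
rewrite mulmxDl mul1mx -scalemxAl !mulmxBr !mulmx1 -!scalemxAr.
rewrite !(delta_mulmxE, mulmx_deltaE, mxE).
by move: (i == p)%:R (j == q)%:R => ip jq; ring.
Qed.

Lemma strictly_upper_nz_lt {F : fieldType} {n : nat} {A : 'M[F]_n} {x y : 'I_n} :
  strictly_upper A -> A x y != 0 -> (x < y)%N.
Proof. by move=> upA; apply: contraR; rewrite -leqNgt => /upA ->; rewrite eqxx. Qed.

Lemma elem_sim_upperE {F : fieldType} {n : nat} (lam : F) (p q : 'I_n)
    (A : 'M[F]_n) i j :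
  strictly_upper A -> (p < q)%N ->
  elem_sim lam p q A i j = A i j + lam * ((i == p)%:R * A q j - A i p * (j == q)%:R).
Proof.
move=> upA ltpq; have Aqp : A q p = 0 by apply: upA; apply: ltnW.
by rewrite elem_simE ?neq_ltn ?ltpq // Aqp mulr0 mul0r mulr0 subr0.
Qed.

Lemma elem_sim_upper_entry_eq0 {F : fieldType} {n : nat} {lam : F} {p q : 'I_n}
    {A : 'M[F]_n} {i j : 'I_n} :
  strictly_upper A -> (p < q)%N -> A i j != 0 -> elem_sim lam p q A i j = 0 ->
  (i = p /\ A q j != 0) \/ (j = q /\ A i p != 0).
Proof.
move=> upA ltpq Aij; rewrite elem_sim_upperE // => Aij0.
have shift_nz : (i == p)%:R * A q j - A i p * (j == q)%:R != 0.
  by apply: contraNneq Aij => shift0; rewrite -Aij0 shift0 mulr0 addr0.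
move: shift_nz.
case: (i =P p) => [<-|_]; case: (j =P q) => [<-|_]; rewrite ?eqxx.
- by rewrite !upA // mulr0 mul0r subr0 eqxx.
- by rewrite mul1r mulr0 subr0; left.
- by rewrite mul0r mulr1 sub0r oppr_eq0; right.
- by rewrite mul0r mulr0 subrr eqxx.
Qed.

Lemma elem_sim_clear_by_column {F : fieldType} {n : nat} (A : 'M[F]_n) (i p j : 'I_n) :
  strictly_upper A -> A i p != 0 -> (p < j)%N ->
  elem_sim (A i j / A i p) p j A i j = 0.
Proof.
move=> upA Aip ltpj; rewrite elem_sim_upperE // eqxx.
have /negbTE -> : i != p by rewrite neq_ltn (strictly_upper_nz_lt upA Aip).
by rewrite mul0r mulr1 sub0r mulrN mulrVK ?unitfE // subrr.
Qed.

Lemma elem_sim_clear_by_row {F : fieldType} {n : nat} (A : 'M[F]_n) (i q j : 'I_n) :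
  strictly_upper A -> A q j != 0 -> (i < q)%N ->
  elem_sim (- (A i j / A q j)) i q A i j = 0.
Proof.
move=> upA Aqj ltiq; rewrite elem_sim_upperE // eqxx.
have /negbTE -> : j != q by rewrite neq_ltn (strictly_upper_nz_lt upA Aqj) orbT.
by rewrite mul1r mulr0 subr0 mulNr mulrVK ?unitfE // subrr.
Qed.

Theorem lemma3p4 (F : fieldType) (n : nat) (A : 'M[F]_n) (i j : 'I_n) :
  strictly_upper A -> A i j != 0 ->
  (exists (lam : F) (p q : 'I_n), (p < q)%N /\ elem_sim lam p q A i j = 0) ->
  (exists p' : 'I_n, [/\ (i < p')%N, (p' < j)%N, A i p' != 0 &
      elem_sim (A i j / A i p') p' j A i j = 0])
  \/
  (exists q' : 'I_n, [/\ (i < q')%N, (q' < j)%N, A q' j != 0 &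
      elem_sim (- (A i j / A q' j)) i q' A i j = 0]).
Proof.
move=> upA Aij [lam [p [q [ltpq /(elem_sim_upper_entry_eq0 upA ltpq Aij)]]]].
case=> [[eip Aqj] | [ejq Aip]]; subst.
- right; exists q; split=> //; first exact: strictly_upper_nz_lt upA Aqj.
  exact: elem_sim_clear_by_row.
- left; exists p; split=> //; first exact: strictly_upper_nz_lt upA Aip.
  exact: elem_sim_clear_by_column.
Qed.
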